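(* Let $p$ be a prime with $p \equiv 7 \pmod{12}$. For each primitive $6$th root of unity $u \in \mathbb{Z}_p$, there is a simple $\mathbb{Z}_p$-invariant rank $3$ matroid structure on $\mathbb{Z}_p$ in which a $3$-element subset is a basis unless it is of the form $\{x, x+\alpha^2, x+u\alpha^2\}$ for some $x \in \mathbb{Z}_p$ and $\alpha \in \mathbb{Z}_p^\times$.
   Context: $\mathbb{Z}_p$ acts on itself by translation; a matroid on $\mathbb{Z}_p$ is $\mathbb{Z}_p$-invariant if translates of bases are bases. A matroid is simple if every circuit has at least three elements. *)

From mathcomp Require Import all_boot all_algebra.
Set Implicit Arguments. Unset Strict Implicit. Unset Printing Implicit Defensive.
Import GRing.Theory.
Local Open Scope ring_scope.

Definition matroid_bases (T : finType) (B : {set {set T}}) : Prop :=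
  B != set0 /\
  forall B1 B2, B1 \in B -> B2 \in B -> forall x, x \in B1 :\: B2 ->
    exists2 y, y \in B2 :\: B1 & y |: (B1 :\ x) \in B.

Definition m_indep (T : finType) (B : {set {set T}}) (I : {set T}) : Prop :=
  exists2 b, b \in B & I \subset b.

Definition m_circuit (T : finType) (B : {set {set T}}) (C : {set T}) : Prop :=
  ~ m_indep B C /\ forall D : {set T}, D \proper C -> m_indep B D.

Definition m_simple (T : finType) (B : {set {set T}}) : Prop :=
  forall C, m_circuit B C -> (3 <= #|C|)%N.

Definition m_rank_eq (T : finType) (B : {set {set T}}) (r : nat) : Prop :=
  forall b, b \in B -> #|b| = r.

Definition Zp_invariant (p : nat) (B : {set {set 'F_p}}) : Prop :=
  forall b (x : 'F_p), b \in B -> [set y + x | y in b] \in B.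

From mathcomp Require Import all_boot all_algebra.
From mathcomp Require Import finfield ring zify.
Set Implicit Arguments. Unset Strict Implicit. Unset Printing Implicit Defensive.
Import GRing.Theory.

(* A primitive sixth root u satisfies u^2 = u - 1, which makes every triangle
   {x, x + a^2, x + u a^2} cyclically symmetric: started at any of its points
   y it reads {y, y + b^2, y + u b^2}.  So for two of its points y != z it is
   either {y, z, y + u (z - y)} with z - y a square, or {z, y, z + u (y - z)}
   with y - z a square.  As p = 3 (mod 4), -1 is not a square, so only one of
   the two can occur, and two distinct points lie on at most one triangle.
   For any family of "lines" with this property on at least four points, the
   3-sets that are not lines are the bases of a simple rank-3 (paving)
   matroid: basis exchange could only fail if two different lines passed
   through the same pair of points. *)

Section PavingMatroid.
Variables (T : finType) (lines : {set {set T}}).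

Definition paving_bases : {set {set T}} :=
  [set S : {set T} | (#|S| == 3) && (S \notin lines)].

Lemma paving_bases_rank : m_rank_eq paving_bases 3.
Proof. by move=> S; rewrite inE => /andP[/eqP]. Qed.

Hypothesis lines_meet :
  {in lines &, forall L1 L2, 1 < #|L1 :&: L2| -> L1 = L2}.
Hypothesis card_T : 3 < #|T|.

Lemma exists_notin (A : {set T}) : #|A| < #|T| -> exists c, c \notin A.
Proof.
move=> ltA; have /set0Pn[c] : ~: A != set0.
  by rewrite -card_gt0; move: (cardsC A); lia.
by rewrite inE; exists c.
Qed.

Lemma line_through_pair (R : {set T}) y z :
  #|R| = 2 -> y |: R \in lines -> z |: R \in lines -> z \in y |: R.
Proof.
move=> cR yR zR; rewrite (lines_meet yR zR) ?setU11 //.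
by rewrite -cR; apply/subset_leq_card; rewrite subsetI !subsetUr.
Qed.

Lemma card2_indep (R : {set T}) : #|R| = 2 -> m_indep paving_bases R.
Proof.
move=> cR.
have card3 c : c \notin R -> #|c |: R| = 3 by move=> cR'; rewrite cardsU1 cR' cR.
have basis c : c \notin R -> c |: R \notin lines -> m_indep paving_bases R.
  by move=> cR' cl; exists (c |: R); rewrite ?subsetUr // inE card3 ?eqxx.
have [c1 c1R] : exists c, c \notin R by apply: exists_notin; rewrite cR; lia.
have [l1|] := boolP (c1 |: R \in lines); last exact: basis.
have [c2 c2R1] : exists c, c \notin c1 |: R by apply: exists_notin; rewrite card3.
have c2R : c2 \notin R by apply: contra c2R1; apply/subsetP/subsetUr.
by apply: (basis c2) => //; apply: contra c2R1; apply: line_through_pair.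
Qed.

Lemma small_indep (I : {set T}) : #|I| <= 2 -> m_indep paving_bases I.
Proof.
move Ek : (2 - #|I|) => k; elim: k I Ek => [|k IH] I Ek le2.
  by apply: card2_indep; lia.
have [c cI] : exists c, c \notin I by apply: exists_notin; lia.
have cardcI : #|c |: I| = #|I|.+1 by rewrite cardsU1 cI.
have [S SB sub] : m_indep paving_bases (c |: I) by apply: IH; rewrite cardcI; lia.
by exists S => //; apply: subset_trans sub; apply: subsetUr.
Qed.

Lemma paving_simple : m_simple paving_bases.
Proof. by move=> C [Cdep _]; rewrite leqNgt; apply: contra_notN Cdep; apply: small_indep. Qed.

Lemma paving_matroid_bases : matroid_bases paving_bases.
Proof.
split.
  have [S SB _] : m_indep paving_bases set0 by apply: small_indep; rewrite cards0.
  by apply/set0Pn; exists S.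
move=> B1 B2; rewrite !inE => /andP[/eqP c1 _] /andP[/eqP c2 l2] x.
rewrite inE => /andP[xB2 xB1]; set R := B1 :\ x.
have cR : #|R| = 2 by move: (cardsD1 x B1); rewrite xB1 c1 add1n => -[].
have card3 y : y \notin B1 -> #|y |: R| = 3.
  move=> yB1; rewrite cardsU1 cR (contra _ yB1) //; apply/subsetP/subD1set.
have [/exists_inP[y yD yB]|/exists_inPn no_basis] :=
  boolP [exists y in B2 :\: B1, y |: R \in paving_bases]; first by exists y.
have to_line y : y \in B2 :\: B1 -> y |: R \in lines.
  move=> yD; have := no_basis y yD; move: yD; rewrite !inE => /andP[yB1 _].
  by rewrite card3 // eqxx negbK.
have [y0 y0D] : exists y0, y0 \in B2 :\: B1.
  apply/set0Pn; rewrite setD_eq0; apply: contra xB2 => sub.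
  by have /eqP -> : B2 == B1 by rewrite eqEcard sub c1 c2.
have y0B1 : y0 \notin B1 by move: y0D; rewrite inE => /andP[].
have [z zB2 zy0R] : exists2 z, z \in B2 & z \notin y0 |: R.
  apply/subsetPn; apply: contra l2 => sub.
  have /eqP -> : B2 == y0 |: R by rewrite eqEcard sub c2 card3.
  exact: to_line.
have zB1 : z \notin B1.
  apply: contra zy0R => zB1; rewrite in_setU1 in_setD1 zB1 andbT.
  by apply/orP; right; apply: contraNneq xB2 => <-.
have zD : z \in B2 :\: B1 by rewrite inE zB1.
by case/negP: zy0R; apply: (line_through_pair cR); apply: to_line.
Qed.

End PavingMatroid.

Local Open Scope ring_scope.

Lemma paving_bases_Zp_invariant p (lines : {set {set 'F_p}}) :
  (forall L x, L \in lines -> [set y + x | y in L] \in lines) ->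
  Zp_invariant (paving_bases lines).
Proof.
move=> lines_tr b x; rewrite !inE card_imset; last exact: addIr.
case/andP=> -> bl; apply: contra bl => /(lines_tr _ (- x)).
by rewrite -imset_comp (eq_imset _ (addrK x)) imset_id.
Qed.

Section SquareTriangles.
Variables (F : finFieldType) (u : F).

Definition triangle (x s : F) : {set F} := [set x; x + s; x + u * s].

Definition sq_triangles : {set {set F}} :=
  [set L | [exists x, exists a, (a != 0) && (L == triangle x (a ^+ 2))]].

Lemma sq_trianglesP L :
  reflect (exists x a, a != 0 /\ L = triangle x (a ^+ 2)) (L \in sq_triangles).
Proof.
rewrite inE; apply: (iffP existsP) => [[x /existsP[a /andP[a0 /eqP ->]]]|].
  by exists x, a.
by case=> x [a [a0 ->]]; exists x; apply/existsP; exists a; rewrite a0 eqxx.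
Qed.

Lemma triangle_translate x s t :
  [set y + t | y in triangle x s] = triangle (x + t) s.
Proof. by rewrite /triangle !imsetU !imset_set1 (addrAC x s) (addrAC x (u * s)). Qed.

Lemma sq_triangles_translate L t :
  L \in sq_triangles -> [set y + t | y in L] \in sq_triangles.
Proof.
case/sq_trianglesP=> x [a [a0 ->]]; apply/sq_trianglesP.
by exists (x + t), a; rewrite triangle_translate.
Qed.

Hypothesis u_sq : u ^+ 2 = u - 1.

Lemma triangle_rot x s : triangle x s = triangle (x + s) (u ^+ 2 * s).
Proof.
rewrite /triangle (_ : x + s + u ^+ 2 * s = x + u * s); last by ring: u_sq.
rewrite (_ : x + s + u * (u ^+ 2 * s) = x); last by ring: u_sq.
by rewrite [RHS]setUC setUA.
Qed.

Lemma triangle_rotr x s : triangle x s = triangle (x + u * s) (- (u * s)).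
Proof. by rewrite triangle_rot triangle_rot; congr triangle; ring: u_sq. Qed.

Lemma sq_triangle_from L y :
  L \in sq_triangles -> y \in L -> exists b, L = triangle y (b ^+ 2).
Proof.
case/sq_trianglesP=> x [a [_ ->]]; rewrite !inE => /orP[/orP[]|] /eqP ->.
- by exists a.
- by exists (u * a); rewrite triangle_rot exprMn.
- by exists (u ^+ 2 * a); rewrite triangle_rotr; congr triangle; ring: u_sq.
Qed.

Lemma sq_triangle_through L y z : L \in sq_triangles -> y \in L -> z \in L -> y != z ->
  (exists b, z - y = b ^+ 2) /\ L = triangle y (z - y) \/
  (exists b, y - z = b ^+ 2) /\ L = triangle z (y - z).
Proof.
move=> Ltri yL zL yz; have [b Lb] := sq_triangle_from Ltri yL.
move: zL; rewrite Lb !inE eq_sym (negPf yz) /= => /orP[] /eqP ->.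
  by left; split; [exists b | congr triangle]; ring.
right; split; first by exists (u ^+ 2 * b); ring: u_sq.
by rewrite {1}triangle_rotr; congr triangle; ring.
Qed.

Hypothesis no_sqrt_m1 : forall b : F, b ^+ 2 != -1.

Lemma sqr_opp_sqr_eq0 (d b c : F) : d = b ^+ 2 -> - d = c ^+ 2 -> d = 0.
Proof.
move=> db dc; apply/eqP; apply: contraT => d0.
by have := no_sqrt_m1 (c / b); rewrite expr_div_n -dc -db mulNr divff // eqxx.
Qed.

Lemma sq_triangles_meet :
  {in sq_triangles &, forall L1 L2, (1 < #|L1 :&: L2|)%N -> L1 = L2}.
Proof.
move=> L1 L2 L1tri L2tri /card_gt1P[y [z []]]; rewrite !inE.
case/andP=> yL1 yL2 /andP[zL1 zL2] yz.
have opp_sq (b c : F) : z - y = b ^+ 2 -> y - z = c ^+ 2 -> False.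
  move=> Eb Ec; have zy : z - y = 0 by apply: (sqr_opp_sqr_eq0 (c := c) Eb); rewrite opprB.
  by move: yz; rewrite eq_sym -subr_eq0 zy eqxx.
case: (sq_triangle_through L1tri yL1 zL1 yz) => -[[b Eb] ->];
case: (sq_triangle_through L2tri yL2 zL2 yz) => -[[c Ec] ->] //.
  by case: (opp_sq b c).
by case: (opp_sq c b).
Qed.

End SquareTriangles.

Lemma prim6_root_sqr (R : idomainType) (u : R) :
  6.-primitive_root u -> u ^+ 2 = u - 1.
Proof.
move=> hu; have u6 := prim_expr_order hu.
have u3 : u ^+ 3 != 1 by rewrite -(prim_order_dvd hu).
have u2 : u ^+ 2 != 1 by rewrite -(prim_order_dvd hu).
have : (u ^+ 3 - 1) * (u + 1) * (u ^+ 2 - u + 1) = 0 by ring: u6.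
move/eqP; rewrite !mulf_eq0 subr_eq0 (negPf u3) /= addr_eq0 => /orP[/eqP u_m1|].
  by move: u2; rewrite u_m1 sqrrN expr1n eqxx.
by move/eqP=> E; rewrite -[LHS]subr0 -E; ring.
Qed.

Lemma Fp_sqr_neq_m1 p (b : 'F_p) : prime p -> (p %% 4 = 3)%N -> b ^+ 2 != -1.
Proof.
move=> hp p4; apply/eqP => hb.
have two0 : (2 : 'F_p) != 0.
  by rewrite -(dvdn_pcharf (pchar_Fp hp)); apply/negP => /dvdn_leq; lia.
have p_eq : (4 * (p %/ 4) + 3)%N = p by lia.
have bp : b ^+ (4 * (p %/ 4) + 3) = b by rewrite p_eq -{2}(expf_card b) card_Fp.
have b4 : b ^+ 4 = 1 by rewrite (exprM b 2 2) hb sqrrN expr1n.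
have : b ^+ (4 * (p %/ 4) + 3) = - b.
  by rewrite exprD exprM b4 expr1n mul1r exprS hb mulrN1.
rewrite bp => /eqP; rewrite -subr_eq0 opprK -mulr2n -mulr_natl mulf_eq0.
rewrite (negPf two0) /= => /eqP b0.
by move: hb; rewrite b0 expr0n /= => /eqP; rewrite eq_sym oppr_eq0 oner_eq0.
Qed.

Theorem proposition3p13 (p : nat) (hp : prime p) (hmod : (p %% 12 = 7)%N)
  (u : 'F_p) (hu : 6.-primitive_root u) :
  exists B : {set {set 'F_p}},
    [/\ matroid_bases B, m_rank_eq B 3, m_simple B, Zp_invariant B &
      forall S : {set 'F_p}, #|S| = 3%N ->
        (S \in B <->
         ~ exists (x a : 'F_p), a != 0 /\ S = [set x; x + a ^+ 2; x + u * a ^+ 2])].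
Proof.
have no_sqrt_m1 (b : 'F_p) : b ^+ 2 != -1 by apply: (Fp_sqr_neq_m1 _ hp); lia.
have meet := sq_triangles_meet (prim6_root_sqr hu) no_sqrt_m1.
have cardF : (3 < #|'F_p|)%N by rewrite card_Fp //; lia.
exists (paving_bases (sq_triangles u)); split.
- exact: paving_matroid_bases meet cardF.
- exact: paving_bases_rank.
- exact: paving_simple meet cardF.
- exact/paving_bases_Zp_invariant/sq_triangles_translate.
- move=> S cS; rewrite inE cS eqxx /=.
  by split=> [/negP nS /sq_trianglesP | nS]; last apply/negP => /sq_trianglesP.
Qed.
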